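(* Let $L_1=U\oplus A_2$ with $\mathbb{Z}$-basis $e_1,\dots,e_4$ and Gram matrix $$\begin{pmatrix}0&1&0&0\\1&0&0&0\\0&0&-2&-1\\0&0&-1&-2\end{pmatrix}.$$ Let $v_1=(1,-1,0,0)$, $v_2=(0,0,-1,0)$, $v_3=(0,0,0,1)$, $v_4=(0,1,1,-1)$ (coordinates in this basis). Then $\operatorname{O}^+(L_1)$ is generated by the reflections $\sigma_{v_1},\sigma_{v_2},\sigma_{v_3},\sigma_{v_4}$ together with the isometry $(x_1,x_2,x_3,x_4)\mapsto(x_1,x_2,-x_4,-x_3)$.
   Context: For a non-isotropic vector $w$, $\sigma_w(x)=x-\frac{2(x,w)}{(w,w)}w$. The real spinor norm of $g=\sigma_{w_1}\cdots\sigma_{w_m}\in\operatorname{O}(L_1\otimes\mathbb{R})$ is $\prod_i(-(w_i,w_i)/2)\in\mathbb{R}^*/(\mathbb{R}^* )^2$, and $\operatorname{O}^+(L_1)$ is the subgroup of $\operatorname{O}(L_1)$ of elements with real spinor norm $1$ (for this Lorentzian lattice, equivalently those preserving each component of the cone of positive vectors). *)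

From HB Require Import structures.
From mathcomp Require Import all_boot all_order all_algebra.
From mathcomp Require Import reals.
Set Implicit Arguments. Unset Strict Implicit. Unset Printing Implicit Defensive.
Import Order.TTheory GRing.Theory Num.Theory.
Local Open Scope ring_scope.

(* Convention: vectors are ROW vectors 'rV_4 (coordinates in e1..e4); a linear
   map x |-> x *m g is represented by the matrix g. *)

Definition gram_entry (i j : nat) : int :=
  match i, j with
  | 0, 1 | 1, 0 => 1
  | 2, 2 | 3, 3 => -2
  | 2, 3 | 3, 2 => -1
  | _, _ => 0
  end.

Definition Gram : 'M[int]_4 := \matrix_(i < 4, j < 4) gram_entry i j.

Definition GramF (F : pzRingType) : 'M[F]_4 := map_mx (fun z : int => z%:~R) Gram.

Definition bil (F : pzRingType) (x y : 'rV[F]_4) : F := (x *m GramF F *m y^T) 0 0.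

(* matrix of the reflection sigma_w(x) = x - 2(x,w)/(w,w) w, x |-> x *m reflmx w *)
Definition reflmx (F : fieldType) (w : 'rV[F]_4) : 'M[F]_4 :=
  1%:M - (2 / bil w w) *: (GramF F *m w^T *m w).

Definition isometryL1 (g : 'M[int]_4) : bool :=
  (g \in unitmx) && (g *m Gram *m g^T == Gram).

(* real spinor norm of g equals 1: g = sigma_{w_1} ... sigma_{w_m} over R with
   prod_i (-(w_i,w_i)/2) positive (i.e. trivial modulo squares in R^x). *)
Definition real_spinor_norm_one (R : realType) (g : 'M[int]_4) : Prop :=
  exists s : seq 'rV[R]_4,
    [/\ all (fun w => bil w w != 0) s,
        map_mx (fun z : int => z%:~R) g = \prod_(w <- s) reflmx w
      & 0 < \prod_(w <- s) (- bil w w / 2)].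

Definition OplusL1 (R : realType) (g : 'M[int]_4) : Prop :=
  isometryL1 g /\ real_spinor_norm_one R g.

Definition is_refl_of (v : 'rV[int]_4) (g : 'M[int]_4) : Prop :=
  map_mx (fun z : int => z%:~R : rat) g = reflmx (map_mx (fun z : int => z%:~R : rat) v).

Definition rv4 (a b c d : int) : 'rV[int]_4 :=
  \row_(j < 4) nth 0 [:: a; b; c; d] j.

Definition v1 : 'rV[int]_4 := rv4 1 (-1) 0 0.
Definition v2 : 'rV[int]_4 := rv4 0 0 (-1) 0.
Definition v3 : 'rV[int]_4 := rv4 0 0 0 1.
Definition v4 : 'rV[int]_4 := rv4 0 1 1 (-1).

(* the isometry (x1,x2,x3,x4) |-> (x1,x2,-x4,-x3) as x |-> x *m swap34 *)
Definition swap34 : 'M[int]_4 :=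
  \matrix_(i < 4, j < 4)
    (if (i == j) && (i < 2)%N then 1
     else if ((i == 2%N :> nat) && (j == 3%N :> nat)) || ((i == 3%N :> nat) && (j == 2%N :> nat)) then -1
     else 0).

Definition L1_gens (g : 'M[int]_4) : Prop :=
  is_refl_of v1 g \/ is_refl_of v2 g \/ is_refl_of v3 g \/ is_refl_of v4 g \/ g = swap34.

Inductive gen_group (S : 'M[int]_4 -> Prop) : 'M[int]_4 -> Prop :=
| gen_one : gen_group S 1%:M
| gen_base g : S g -> gen_group S g
| gen_inv g : gen_group S g -> gen_group S (invmx g)
| gen_mul g h : gen_group S g -> gen_group S h -> gen_group S (g *m h).

From HB Require Import structures.
From mathcomp Require Import all_boot all_order all_algebra.
From mathcomp Require Import reals.
From mathcomp Require Import ring lra zify.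
Set Implicit Arguments. Unset Strict Implicit. Unset Printing Implicit Defensive.
Import Order.TTheory GRing.Theory Num.Theory.
Local Open Scope ring_scope.

(* One inclusion: every generator is a reflection in a vector of negative norm
   ([swap34] is the reflection in (0, 0, 1, 1)), hence has real spinor norm 1.

   Conversely, a reflection in a vector of norm n maps a vector x of positive norm
   into the other component of the positive cone iff n > 0, so an element g of
   O^+(L1) keeps r0 = e_1 + e_2 in its component. The vector rho = (3, 4, 1, -1)
   satisfies (v_i, rho) = 1, hence (x, rho) > 0 on that component. While
   (r0 g, v_i) < 0 for some i, replacing g by g sigma_{v_i} lowers the positive
   integer (r0 g, rho); once no v_i applies, r0 g lies in the fundamental chamber
   and has norm 2, which forces r0 g = r0. The same descent for rho, with v_1, v_2,
   v_3 (orthogonal to r0), leaves an isometry fixing r0 and rho, and the only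
   such isometries are 1 and [swap34]. *)

Definition i0 : 'I_4 := @Ordinal 4 0 isT.
Definition i1 : 'I_4 := @Ordinal 4 1 isT.
Definition i2 : 'I_4 := @Ordinal 4 2 isT.
Definition i3 : 'I_4 := @Ordinal 4 3 isT.

Lemma sum4 (V : nmodType) (f : 'I_4 -> V) : \sum_(i < 4) f i = f i0 + f i1 + f i2 + f i3.
Proof.
rewrite !big_ord_recl big_ord0 addr0 !addrA.
by congr (_ + _ + _ + _); congr f; apply: val_inj.
Qed.

Lemma ord4_cases (P : 'I_4 -> Prop) : P i0 -> P i1 -> P i2 -> P i3 -> forall j, P j.
Proof.
move=> h0 h1 h2 h3 [[|[|[|[|k]]]] lt_j4] //.
- by rewrite (_ : Ordinal _ = i0) //; apply: val_inj.
- by rewrite (_ : Ordinal _ = i1) //; apply: val_inj.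
- by rewrite (_ : Ordinal _ = i2) //; apply: val_inj.
- by rewrite (_ : Ordinal _ = i3) //; apply: val_inj.
Qed.

Lemma row4P (T : Type) (x y : 'rV[T]_4) :
  x 0 i0 = y 0 i0 -> x 0 i1 = y 0 i1 -> x 0 i2 = y 0 i2 -> x 0 i3 = y 0 i3 -> x = y.
Proof. by move=> *; apply/matrixP => i; rewrite ord1; apply: ord4_cases. Qed.

Lemma rv4_eta (x : 'rV[int]_4) : x = rv4 (x 0 i0) (x 0 i1) (x 0 i2) (x 0 i3).
Proof. by apply: row4P; rewrite !mxE. Qed.

Section Form.
Variable F : comPzRingType.
Implicit Types x y w : 'rV[F]_4.

Lemma bilE x y :
  bil x y = x 0 i0 * y 0 i1 + x 0 i1 * y 0 i0 - 2 * x 0 i2 * y 0 i2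
          - x 0 i2 * y 0 i3 - x 0 i3 * y 0 i2 - 2 * x 0 i3 * y 0 i3.
Proof. by rewrite /bil !mxE sum4 !mxE !sum4 !mxE /=; ring. Qed.

Lemma bilC x y : bil x y = bil y x.
Proof. by rewrite !bilE; ring. Qed.

Lemma bilDl x y w a : bil (x + a *: w) y = bil x y + a * bil w y.
Proof. by rewrite !bilE !mxE; ring. Qed.

Lemma bilDr x y w a : bil y (x + a *: w) = bil y x + a * bil y w.
Proof. by rewrite !bilE !mxE; ring. Qed.

Lemma bilBl x y w a : bil (x - a *: w) y = bil x y - a * bil w y.
Proof. by rewrite !bilE !mxE; ring. Qed.

Lemma bilBr x y w a : bil y (x - a *: w) = bil y x - a * bil y w.
Proof. by rewrite !bilE !mxE; ring. Qed.

(* The pairing with e_1 + e_2; for vectors of positive norm its sign tells the two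
   components of the positive cone apart. *)
Definition tcoord x : F := x 0 i0 + x 0 i1.

End Form.

Lemma bil_rv4 (a b c d a' b' c' d' : int) :
  bil (rv4 a b c d) (rv4 a' b' c' d') =
  a * b' + b * a' - 2 * c * c' - c * d' - d * c' - 2 * d * d'.
Proof. by rewrite bilE !mxE. Qed.

Notation intmx F := (map_mx (fun z : int => z%:~R : F)).

Lemma GramF_int : GramF int = Gram.
Proof. by apply/matrixP => i j; rewrite !mxE intz. Qed.

Lemma bil_intmx (F : comPzRingType) (x y : 'rV[int]_4) :
  bil (intmx F x) (intmx F y) = (bil x y)%:~R.
Proof. by rewrite /bil GramF_int /GramF map_trmx -!map_mxM mxE. Qed.

Lemma tcoord_intmx (F : comPzRingType) (x : 'rV[int]_4) : tcoord (intmx F x) = (tcoord x)%:~R.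
Proof. by rewrite /tcoord !mxE rmorphD. Qed.

Lemma reverse_cauchy_schwarz (R : realDomainType) (u u' P P' m : R) :
  0 <= P -> 0 <= P' -> P < u ^+ 2 -> P' < u' ^+ 2 -> m ^+ 2 <= P * P' ->
  0 < u * u' * (u * u' - m).
Proof.
move=> P0 P'0 Pu Pu' mP.
have u'0 : 0 < u' ^+ 2 by apply: le_lt_trans Pu'.
have PP' : P * P' < (u * u') ^+ 2.
  rewrite exprMn; apply: (@le_lt_trans _ _ (P * u' ^+ 2)); first by rewrite ler_wpM2l // ltW.
  by rewrite ltr_pM2r.
have := sqr_ge0 (u * u' - m).
(* [k (k - m) = ((k - m)^2 + (k^2 - m^2)) / 2] with [k = u u'] *)
nra.
Qed.

Lemma timelike_bil_sign (R : realDomainType) (x y : 'rV[R]_4) :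
  0 < bil x x -> 0 < bil y y -> 0 < tcoord x * tcoord y * bil x y.
Proof.
rewrite !bilE /tcoord.
move: (x 0 i0) (x 0 i1) (x 0 i2) (x 0 i3) (y 0 i0) (y 0 i1) (y 0 i2) (y 0 i3).
move=> a b c d a' b' c' d' hx hy.
(* Diagonalize [2 (x, x) = (a + b)^2 - P], with [P] a positive definite form in
   [a - b, 2c + d, d]; [m] is the associated bilinear form. *)
pose P := (a - b) ^+ 2 + (2 * c + d) ^+ 2 + 3 * d ^+ 2.
pose P' := (a' - b') ^+ 2 + (2 * c' + d') ^+ 2 + 3 * d' ^+ 2.
pose m := (a - b) * (a' - b') + (2 * c + d) * (2 * c' + d') + 3 * d * d'.
have P0 : 0 <= P.
  by rewrite /P; apply: addr_ge0; [apply: addr_ge0|apply: mulr_ge0]; rewrite ?sqr_ge0.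
have P'0 : 0 <= P'.
  by rewrite /P'; apply: addr_ge0; [apply: addr_ge0|apply: mulr_ge0]; rewrite ?sqr_ge0.
have lagrange : P * P' - m ^+ 2 =
    ((a - b) * (2 * c' + d') - (2 * c + d) * (a' - b')) ^+ 2
  + 3 * ((a - b) * d' - d * (a' - b')) ^+ 2
  + 3 * ((2 * c + d) * d' - d * (2 * c' + d')) ^+ 2 by rewrite /P /P' /m; ring.
have := @reverse_cauchy_schwarz R (a + b) (a' + b') P P' m P0 P'0.
have -> : (a + b) * (a' + b') - m =
    2 * (a * b' + b * a' - 2 * c * c' - c * d' - d * c' - 2 * d * d') by rewrite /m; ring.
have hm : m ^+ 2 <= P * P'.
  rewrite -subr_ge0 lagrange.
  apply: addr_ge0; [apply: addr_ge0; [|apply: mulr_ge0]|apply: mulr_ge0];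
  by rewrite ?sqr_ge0.
rewrite /P /P' in P0 P'0 hm *; nra.
Qed.

Lemma bil_gt0_tcoord (R : realDomainType) (x y : 'rV[R]_4) :
  0 < bil x x -> 0 < bil y y -> 0 < tcoord x -> (0 < bil x y) = (0 < tcoord y).
Proof.
move=> hx hy tx; have := timelike_bil_sign hx hy.
rewrite -mulrA pmulr_rgt0 // => h.
by apply/idP/idP => ?; nra.
Qed.

Lemma mulmx_rowP (R : pzRingType) (m n : nat) (A B : 'M[R]_(m, n)) :
  (forall x : 'rV[R]_m, x *m A = x *m B) -> A = B.
Proof. by move=> eqAB; apply/row_matrixP => i; rewrite !rowE eqAB. Qed.

Section Reflection.
Variable F : fieldType.
Implicit Types x y w : 'rV[F]_4.

Lemma reflmxE w x : x *m reflmx w = x - (2 / bil w w * bil x w) *: w.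
Proof.
rewrite /reflmx mulmxBr mulmx1 -scalemxAr !mulmxA.
by rewrite (mx11_scalar (x *m GramF F *m w^T)) mul_scalar_mx scalerA.
Qed.

Lemma bil_reflmx w x y : bil w w != 0 -> bil (x *m reflmx w) (y *m reflmx w) = bil x y.
Proof.
move=> nz_w; rewrite !reflmxE bilBl !bilBr (bilC w y).
by move: (bil x y) (bil y w) (bil x w) (bil w w) nz_w => a b c n nz_n; field.
Qed.

Lemma reflmx_invol w : bil w w != 0 -> reflmx w *m reflmx w = 1%:M.
Proof.
move=> nz_w; apply: mulmx_rowP => x; rewrite mulmxA !reflmxE mulmx1 bilBl.
rewrite -addrA -!scaleNr -scalerDl [X in X *: w](_ : _ = 0) ?scale0r ?addr0 //.
by field.
Qed.

Lemma prod_reflmx_rev (s : seq 'rV[F]_4) : all (fun w => bil w w != 0) s ->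
  (\prod_(w <- s) reflmx w) *m (\prod_(w <- rev s) reflmx w) = 1%:M.
Proof.
elim: s => [|w s IH] /=; first by rewrite !big_nil mulmx1.
case/andP=> nz_w nz_s; rewrite rev_cons -cats1 big_cat big_cons big_seq1 /= -!mulmxE.
by rewrite -mulmxA (mulmxA _ _ (reflmx w)) IH // mul1mx reflmx_invol.
Qed.

End Reflection.

Section SpinorNorm.
Variable R : realFieldType.
Implicit Types x w : 'rV[R]_4.

(* A reflection in a negative vector preserves each component of the positive cone,
   a reflection in a positive vector exchanges them. *)
Lemma tcoord_reflmx_sign w x : bil w w != 0 -> 0 < bil x x ->
  0 < tcoord x * tcoord (x *m reflmx w) * (- bil w w / 2).
Proof.
move=> nz_w x_pos; set y := x *m reflmx w.
have y_pos : 0 < bil y y by rewrite bil_reflmx.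
have [w_neg|w_nneg] := ltP (bil w w) 0.
  have xy_pos : 0 < bil x y.
    rewrite /y reflmxE bilBr; have : (bil w w)^-1 < 0 by rewrite invr_lt0.
    by move: (bil x w) (bil w w)^-1 => p t t_neg; nra.
  have := timelike_bil_sign x_pos y_pos; rewrite pmulr_lgt0 // => txy.
  by apply: mulr_gt0 => //; lra.
have w_pos : 0 < bil w w by rewrite lt_def nz_w.
have yw : bil y w = - bil x w by rewrite /y reflmxE bilBl; field.
have := timelike_bil_sign x_pos w_pos; have := timelike_bil_sign y_pos w_pos.
rewrite yw; move: (tcoord x) (tcoord y) (tcoord w) (bil x w) => tx ty tw p h1 h2.
have : 0 < - (tx * ty) * (tw * p) ^+ 2.
  have -> : - (tx * ty) * (tw * p) ^+ 2 = (tx * tw * p) * (ty * tw * - p) by ring.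
  exact: mulr_gt0.
move: (tw * p) => q; nra.
Qed.

Lemma tcoord_prod_reflmx_sign (s : seq 'rV[R]_4) x :
  all (fun w => bil w w != 0) s -> 0 < bil x x ->
  0 < tcoord x * tcoord (x *m \prod_(w <- s) reflmx w) * \prod_(w <- s) (- bil w w / 2).
Proof.
elim: s x => [|w s IH] x /=.
  by move=> _ x_pos; rewrite !big_nil mulr1 mulmx1; have := timelike_bil_sign x_pos x_pos; nra.
case/andP=> nz_w nz_s x_pos; rewrite !big_cons -mulmxE mulmxA.
set y := x *m reflmx w.
have y_pos : 0 < bil y y by rewrite bil_reflmx.
have := tcoord_reflmx_sign nz_w x_pos; have := IH y nz_s y_pos.
have := timelike_bil_sign y_pos y_pos; rewrite -/y.
move: (tcoord x) (tcoord y) (tcoord _) (- _ / 2) (\prod_(_ <- _) _) => tx ty tz a b.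
nra.
Qed.

End SpinorNorm.

Definition r0 : 'rV[int]_4 := rv4 1 1 0 0.
(* A Weyl vector: [(v_i, rho) = 1] for the four simple roots. *)
Definition rho : 'rV[int]_4 := rv4 3 4 1 (-1).

Lemma tcoordE (x : 'rV[int]_4) : tcoord x = bil x r0.
Proof. by rewrite /tcoord bilE /r0 !mxE /=; ring. Qed.

Lemma spinor_norm_one_tcoord (R : realType) (g : 'M[int]_4) :
  real_spinor_norm_one R g -> 0 < tcoord (r0 *m g).
Proof.
case=> s [nz_s g_prod sn_pos].
have r0_pos : 0 < bil (intmx R r0) (intmx R r0) by rewrite bil_intmx /r0 bil_rv4.
have := tcoord_prod_reflmx_sign nz_s r0_pos.
rewrite -g_prod -map_mxM !tcoord_intmx [tcoord r0]/tcoord !mxE /=.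
rewrite -mulrA pmulr_rgt0 ?ltr0z // pmulr_lgt0 //.
by rewrite ltr0z.
Qed.

Lemma bil_isometry (g : 'M[int]_4) (x y : 'rV[int]_4) : g *m Gram *m g^T = Gram ->
  bil (x *m g) (y *m g) = bil x y.
Proof.
move=> g_iso; rewrite /bil GramF_int trmx_mul !mulmxA.
by rewrite -(mulmxA x g Gram) -(mulmxA x (g *m Gram) g^T) g_iso.
Qed.

Lemma isometry_of_bil (g : 'M[int]_4) :
  (forall x y, bil (x *m g) (y *m g) = bil x y) -> g *m Gram *m g^T = Gram.
Proof.
move=> g_iso; apply/matrixP => i j; have := g_iso (delta_mx 0 i) (delta_mx 0 j).
rewrite /bil GramF_int trmx_mul !mulmxA -(mulmxA _ g Gram) -(mulmxA _ (g *m Gram) g^T).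
by rewrite trmx_delta -!rowE -!(colE j) !mxE.
Qed.

Lemma isometry_mul (g h : 'M[int]_4) : g *m Gram *m g^T = Gram -> h *m Gram *m h^T = Gram ->
  (g *m h) *m Gram *m (g *m h)^T = Gram.
Proof.
by move=> g_iso h_iso; apply: isometry_of_bil => x y; rewrite !mulmxA !bil_isometry.
Qed.

Lemma isometryL1_invol (g : 'M[int]_4) : g *m g = 1%:M ->
  (forall x y, bil (x *m g) (y *m g) = bil x y) -> isometryL1 g.
Proof.
move=> g_invol g_iso; rewrite /isometryL1 isometry_of_bil // eqxx andbT.
by case: (mulmx1_unit g_invol).
Qed.

(* For a root [v], i.e. [(v, v) = -2], this is [sigma_v], since [2 / (v, v) = -1]. *)
Definition root_reflmx (v : 'rV[int]_4) : 'M[int]_4 := 1%:M + Gram *m v^T *m v.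

Lemma root_reflmxE (v x : 'rV[int]_4) : x *m root_reflmx v = x + bil x v *: v.
Proof.
rewrite /root_reflmx mulmxDr mulmx1 !mulmxA /bil GramF_int.
by rewrite -mul_scalar_mx -mx11_scalar.
Qed.

Section Root.
Variable v : 'rV[int]_4.
Hypothesis v_root : bil v v = -2.

Lemma bil_root_reflmx x y : bil (x *m root_reflmx v) (y *m root_reflmx v) = bil x y.
Proof. by rewrite !root_reflmxE bilDl !bilDr v_root (bilC v y); ring. Qed.

Lemma root_reflmx_isometry : root_reflmx v *m Gram *m (root_reflmx v)^T = Gram.
Proof. exact: isometry_of_bil bil_root_reflmx. Qed.

Lemma tcoord_root_reflmx_gt0 x : 0 < bil x x -> 0 < tcoord x ->
  0 < tcoord (x *m root_reflmx v).
Proof.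
move=> x_pos tx_pos; rewrite -(bil_gt0_tcoord x_pos) ?bil_root_reflmx //.
by rewrite root_reflmxE bilDr -bilC; nra.
Qed.

Lemma root_reflmx_invol : root_reflmx v *m root_reflmx v = 1%:M.
Proof.
apply: mulmx_rowP => x; rewrite mulmxA !root_reflmxE bilDl v_root mulmx1.
rewrite -addrA -scalerDl (_ : bil x v + _ = 0) ?scale0r ?addr0 //; ring.
Qed.

Lemma intmx_root_reflmx (F : numFieldType) : intmx F (root_reflmx v) = reflmx (intmx F v).
Proof.
rewrite /reflmx bil_intmx v_root /root_reflmx map_mxD map_mx1 !map_mxM map_trmx.
rewrite (_ : 2 / _ = -1) ?scaleN1r ?opprK //.
by rewrite rmorphN /=; field.
Qed.

Lemma is_refl_ofE g : is_refl_of v g <-> g = root_reflmx v.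
Proof.
rewrite /is_refl_of -intmx_root_reflmx; split => [eq_g|->] //.
by apply/matrixP => i j; move/matrixP/(_ i j): eq_g; rewrite !mxE => /intr_inj.
Qed.

Lemma OplusL1_root_reflmx (R : realType) : OplusL1 R (root_reflmx v).
Proof.
split; first exact: isometryL1_invol root_reflmx_invol bil_root_reflmx.
exists [:: intmx R v]; rewrite !big_seq1 intmx_root_reflmx; split => //=.
- by rewrite andbT bil_intmx v_root intr_eq0.
- by rewrite bil_intmx v_root (intrN _ 2); lra.
Qed.

End Root.

Lemma swap34_coord (F : pzRingType) (x : 'rV[F]_4) (y := x *m intmx F swap34) :
  [/\ y 0 i0 = x 0 i0, y 0 i1 = x 0 i1, y 0 i2 = - x 0 i3 & y 0 i3 = - x 0 i2].
Proof.
rewrite /y !mxE !sum4 !mxE /= ?mulr0z ?mulrN1z.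
by rewrite !mulr0 ?mulr1 ?mulrN1 ?addr0 ?add0r.
Qed.

Lemma swap34E (x : 'rV[int]_4) : x *m swap34 = rv4 (x 0 i0) (x 0 i1) (- x 0 i3) (- x 0 i2).
Proof.
have := swap34_coord x; rewrite (_ : intmx int swap34 = swap34); last first.
  by apply/matrixP => i j; rewrite mxE intz.
by case=> h0 h1 h2 h3; apply: row4P; rewrite ?h0 ?h1 ?h2 ?h3 !mxE.
Qed.

Lemma swap34_invol : swap34 *m swap34 = 1%:M.
Proof.
apply: mulmx_rowP => x; rewrite mulmxA !swap34E mulmx1.
by apply: row4P; rewrite !mxE /= ?opprK.
Qed.

Lemma bil_swap34 (x y : 'rV[int]_4) : bil (x *m swap34) (y *m swap34) = bil x y.
Proof. by rewrite !swap34E bil_rv4 bilE; ring. Qed.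

Lemma intmx_swap34 (F : numFieldType) : intmx F swap34 = reflmx (intmx F (rv4 0 0 1 1)).
Proof.
apply: mulmx_rowP => x; rewrite reflmxE bil_intmx bil_rv4 (intrN _ 6).
have [h0 h1 h2 h3] := swap34_coord x.
by apply: row4P; rewrite ?h0 ?h1 ?h2 ?h3 !mxE /= bilE !mxE /= ?mulr0z ?mulr1z; field.
Qed.

Lemma OplusL1_swap34 (R : realType) : OplusL1 R swap34.
Proof.
split; first exact: isometryL1_invol swap34_invol bil_swap34.
exists [:: intmx R (rv4 0 0 1 1)]; rewrite !big_seq1 intmx_swap34; split => //=.
- by rewrite andbT bil_intmx bil_rv4 intr_eq0.
- by rewrite bil_intmx bil_rv4 (intrN _ 6); lra.
Qed.

Definition simple_roots : seq 'rV[int]_4 := [:: v1; v2; v3; v4].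

Lemma simple_roots_root v : v \in simple_roots -> bil v v = -2 /\ bil v rho = 1.
Proof. by rewrite !inE => /or4P[]/eqP->; rewrite /v1 /v2 /v3 /v4 /rho !bil_rv4. Qed.

Lemma L1_gens_root_reflmx v : v \in simple_roots -> L1_gens (root_reflmx v).
Proof.
move=> simple_v; have [v_root _] := simple_roots_root simple_v.
have refl_v : is_refl_of v (root_reflmx v) by apply/is_refl_ofE.
move: simple_v; rewrite !inE => /or4P[]/eqP eq_v; rewrite /L1_gens -eq_v.
- by left.
- by right; left.
- by do 2 right; left.
- by do 3 right; left.
Qed.

Lemma OplusL1_L1_gens (R : realType) g : L1_gens g -> OplusL1 R g.
Proof.
have refl_OplusL1 v : v \in simple_roots -> is_refl_of v g -> OplusL1 R g.
  move=> simple_v; have [v_root _] := simple_roots_root simple_v.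
  by move/(is_refl_ofE v_root)->; apply: OplusL1_root_reflmx.
case=> [|[|[|[|->]]]]; last exact: OplusL1_swap34.
all: by apply: refl_OplusL1; rewrite !inE eqxx ?orbT.
Qed.

Section OplusL1Group.
Variable R : realType.

Lemma OplusL1_1 : OplusL1 R 1%:M.
Proof.
split; first by rewrite /isometryL1 unitmx1 mul1mx trmx1 mulmx1 eqxx.
by exists [::]; rewrite !big_nil map_mx1; split=> //; lra.
Qed.

Lemma OplusL1_inv g : OplusL1 R g -> OplusL1 R (invmx g).
Proof.
case=> /andP[g_unit /eqP g_iso] [s [nz_s g_prod sn_pos]]; split.
  rewrite /isometryL1 unitmx_inv g_unit /=; apply/eqP.
  rewrite trmx_inv -{1}g_iso !mulmxA mulVmx // mul1mx -mulmxA mulmxV ?unitmx_tr //.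
  exact: mulmx1.
exists (rev s); rewrite all_rev big_rev; split=> //.
rewrite -[LHS]mulmx1 -(prod_reflmx_rev nz_s) mulmxA -g_prod -map_mxM mulVmx //.
by rewrite map_mx1 mul1mx.
Qed.

Lemma OplusL1_mul g h : OplusL1 R g -> OplusL1 R h -> OplusL1 R (g *m h).
Proof.
case=> /andP[g_unit /eqP g_iso] [s [nz_s g_prod s_pos]].
case=> /andP[h_unit /eqP h_iso] [t [nz_t h_prod t_pos]]; split.
  by rewrite /isometryL1 unitmx_mul g_unit h_unit isometry_mul // eqxx.
exists (s ++ t); rewrite all_cat nz_s nz_t !big_cat map_mxM g_prod h_prod mulmxE.
by split=> //; apply: mulr_gt0.
Qed.

Lemma OplusL1_of_gen_group g : gen_group L1_gens g -> OplusL1 R g.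
Proof.
elim=> {g} [|g|g _|g h _ Rg _ Rh]; [exact: OplusL1_1|exact: OplusL1_L1_gens|exact: OplusL1_inv|].
exact: OplusL1_mul Rg Rh.
Qed.

End OplusL1Group.

(* Vinberg-style descent: as long as [y g] pairs negatively with some simple root [v],
   replacing [g] by [g sigma_v] lowers the positive integer [(y g, rho)] by [-(y g, v)]. *)
Lemma chamber_descent (y : 'rV[int]_4) (vs : seq 'rV[int]_4) (C : 'M[int]_4 -> Prop) :
  {subset vs <= simple_roots} -> 0 < bil y y ->
  (forall g, C g -> g *m Gram *m g^T = Gram /\ 0 < tcoord (y *m g)) ->
  (forall g v, C g -> v \in vs -> C (g *m root_reflmx v)) ->
  (forall g, C g -> {in vs, forall v, 0 <= bil (y *m g) v} -> gen_group L1_gens g) ->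
  forall g, C g -> gen_group L1_gens g.
Proof.
move=> vs_simple y_pos C_cone C_refl C_chamber.
have height_gt0 g : C g -> 0 < bil (y *m g) rho.
  case/C_cone=> g_iso tyg_pos.
  by rewrite bil_gt0_tcoord ?bil_isometry // /rho ?bil_rv4 // /tcoord !mxE.
suff descent n g : C g -> bil (y *m g) rho <= n%:Z -> gen_group L1_gens g.
  by move=> g Cg; apply: (descent `|bil (y *m g) rho|%N) => //; rewrite abszE ler_norm.
elim: n g => [|n IH] g Cg height_le; first by have := height_gt0 g Cg; lia.
have [/hasP[v vs_v yg_v]|/hasPn chamber] := boolP (has (fun v => bil (y *m g) v < 0) vs).
  have [v_root v_rho] := simple_roots_root (vs_simple v vs_v).
  rewrite -[g]mulmx1 -(root_reflmx_invol v_root) mulmxA.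
  apply: gen_mul (gen_base (L1_gens_root_reflmx (vs_simple v vs_v))).
  apply: IH (C_refl g v Cg vs_v) _.
  have height_drop : bil (y *m g *m root_reflmx v) rho = bil (y *m g) rho + bil (y *m g) v.
    by rewrite root_reflmxE bilDl v_rho mulr1.
  rewrite mulmxA height_drop; lia.
by apply: C_chamber => // v /chamber; rewrite -leNgt.
Qed.

Lemma chamber_norm2 (x : 'rV[int]_4) : bil x x = 2 -> 0 < tcoord x ->
  {in simple_roots, forall v, 0 <= bil x v} -> x = r0.
Proof.
move=> xx tx chamber.
have [] : [/\ 0 <= bil x v1, 0 <= bil x v2, 0 <= bil x v3 & 0 <= bil x v4].
  by split; apply: chamber; rewrite !inE eqxx ?orbT.
move: xx tx; rewrite [x]rv4_eta /tcoord /v1 /v2 /v3 /v4 /r0 !bil_rv4 !mxE /=.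
move: (x 0 i0) (x 0 i1) (x 0 i2) (x 0 i3) => a b c d xx tx h1 h2 h3 h4.
have [d_le0 c_ge0] : d <= 0 /\ 0 <= c by lia.
have /eqP : c * d = 0 by nia.
rewrite mulf_eq0 => cd0; have [? ?] : c = 0 /\ d = 0 by case/orP: cd0 => /eqP; lia.
subst c d; have a_gt0 : 0 < a by nia.
have a1 : a = 1 by nia.
by subst a; have -> : b = 1 by lia.
Qed.

Lemma chamber_rho (x : 'rV[int]_4) : bil x x = 22 -> tcoord x = 7 ->
  {in [:: v1; v2; v3], forall v, 0 <= bil x v} -> x = rho.
Proof.
move=> xx tx chamber.
have [] : [/\ 0 <= bil x v1, 0 <= bil x v2 & 0 <= bil x v3].
  by split; apply: chamber; rewrite !inE eqxx ?orbT.
move: xx tx; rewrite [x]rv4_eta /tcoord /v1 /v2 /v3 /rho !bil_rv4 !mxE /=.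
move: (x 0 i0) (x 0 i1) (x 0 i2) (x 0 i3) => a b c d xx tx h1 h2 h3.
have [d_le0 c_ge0] : d <= 0 /\ 0 <= c by lia.
have -> : b = 7 - a by lia.
have a3 : a = 3 by nia.
have q1 : c * c + c * d + d * d = 1 by subst a; lia.
have d1 : d = -1 by nia.
by subst a d; have -> : c = 1 by nia.
Qed.

Lemma int_sqr_le1 (n : int) : n * n <= 1 -> n = -1 \/ n = 0 \/ n = 1.
Proof.
move=> sqr_le1; have n_ge : -1 <= n by nia.
have n_le : n <= 1 by nia.
lia.
Qed.

Lemma roots_perp_r0 (z : 'rV[int]_4) : bil z r0 = 0 -> bil z rho = -1 -> bil z z = -2 ->
  z = rv4 0 0 1 0 \/ z = rv4 0 0 0 (-1) \/ z = rv4 (-1) 1 0 0.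
Proof.
rewrite [z]rv4_eta /r0 /rho !bil_rv4.
move: (z 0 i0) (z 0 i1) (z 0 i2) (z 0 i3) => a b c d z_r0 z_rho zz.
have -> : b = - a by lia.
have c_def : c = a + d + 1 by lia.
have norm1 : a * a + c * c + c * d + d * d = 1 by lia.
have quad : 4 * (c * c + c * d + d * d) = (2 * c + d) * (2 * c + d) + 3 * (d * d) by ring.
have := sqr_ge0 (2 * c + d); have := sqr_ge0 d; have := sqr_ge0 a; rewrite !expr2 => ? ? ?.
have [/int_sqr_le1 a_val /int_sqr_le1 d_val] : a * a <= 1 /\ d * d <= 1 by lia.
have coords : (a = 0 /\ c = 1 /\ d = 0) \/ (a = 0 /\ c = 0 /\ d = -1) \/ (a = -1 /\ c = 0 /\ d = 0).
  by case: a_val => [|[|]] ?; case: d_val => [|[|]] ?; subst a d c; lia.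
case: coords => [[-> [-> ->]]|[[-> [-> ->]]|[-> [-> ->]]]]; rewrite ?oppr0 ?opprK.
- by left.
- by right; left.
- by right; right.
Qed.

(* [r0], [rho], [e_3] and [-e_4] span [L1]: [e_1 = 4 r0 - rho + e_3 + (-e_4)] and
   [e_2 = rho - 3 r0 - e_3 - (-e_4)]. *)
Lemma eq_on_r0_rho_basis (A B : 'M[int]_4) :
  r0 *m A = r0 *m B -> rho *m A = rho *m B ->
  rv4 0 0 1 0 *m A = rv4 0 0 1 0 *m B -> rv4 0 0 0 (-1) *m A = rv4 0 0 0 (-1) *m B -> A = B.
Proof.
move=> eq_r0 eq_rho eq_e3 eq_e4; apply/row_matrixP; apply: ord4_cases; rewrite !rowE.
- rewrite (_ : delta_mx 0 i0 = 4 *: r0 - rho + rv4 0 0 1 0 + rv4 0 0 0 (-1)).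
    by rewrite !mulmxDl !mulNmx -!scalemxAl eq_r0 eq_rho eq_e3 eq_e4.
  by apply: row4P; rewrite !mxE.
- rewrite (_ : delta_mx 0 i1 = rho - 3 *: r0 - rv4 0 0 1 0 - rv4 0 0 0 (-1)).
    by rewrite !mulmxDl !mulNmx -!scalemxAl eq_r0 eq_rho eq_e3 eq_e4.
  by apply: row4P; rewrite !mxE.
- by rewrite (_ : delta_mx 0 i2 = rv4 0 0 1 0) //; apply: row4P; rewrite !mxE.
rewrite (_ : delta_mx 0 i3 = - rv4 0 0 0 (-1)); first by rewrite !mulNmx eq_e4.
by apply: row4P; rewrite !mxE.
Qed.

Lemma stabilizer_r0_rho (g : 'M[int]_4) : g *m Gram *m g^T = Gram ->
  r0 *m g = r0 -> rho *m g = rho -> g = 1%:M \/ g = swap34.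
Proof.
move=> g_iso g_r0 g_rho.
have root_image x : bil x r0 = 0 -> bil x rho = -1 -> bil x x = -2 ->
    x *m g = rv4 0 0 1 0 \/ x *m g = rv4 0 0 0 (-1) \/ x *m g = rv4 (-1) 1 0 0.
  by move=> *; apply: roots_perp_r0; [rewrite -g_r0|rewrite -g_rho|]; rewrite bil_isometry.
have := root_image (rv4 0 0 1 0); have := root_image (rv4 0 0 0 (-1)).
rewrite /r0 /rho !bil_rv4 => /(_ erefl erefl erefl) img4 /(_ erefl erefl erefl) img3.
have := bil_isometry (rv4 0 0 1 0) (rv4 0 0 0 (-1)) g_iso; rewrite bil_rv4.
case: img3 => [e3g|[e3g|e3g]]; case: img4 => [e4g|[e4g|e4g]]; rewrite e3g e4g bil_rv4 //.
all: try lia.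
- by move=> _; left; apply: eq_on_r0_rho_basis; rewrite mulmx1.
- move=> _; right; apply: eq_on_r0_rho_basis; rewrite ?g_r0 ?g_rho ?e3g ?e4g swap34E.
  all: by rewrite /r0 /rho; apply: row4P; rewrite !mxE.
Qed.

Lemma gen_group_stabilizer_r0 (g : 'M[int]_4) : g *m Gram *m g^T = Gram -> r0 *m g = r0 ->
  gen_group L1_gens g.
Proof.
pose C h := h *m Gram *m h^T = Gram /\ r0 *m h = r0.
have tcoord_rho h : C h -> tcoord (rho *m h) = 7.
  by case=> h_iso h_r0; rewrite tcoordE -h_r0 bil_isometry // bil_rv4.
have vs_simple : {subset [:: v1; v2; v3] <= simple_roots}.
  by move=> v; rewrite !inE => /or3P[]->; rewrite ?orbT.
move=> g_iso g_r0; apply: (@chamber_descent rho [:: v1; v2; v3] C) => //.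
- by rewrite bil_rv4.
- by move=> h Ch; split; [case: Ch | rewrite tcoord_rho].
- move=> h v [h_iso h_r0] vs_v; have [v_root _] := simple_roots_root (vs_simple v vs_v).
  split; first exact: isometry_mul (root_reflmx_isometry v_root).
  rewrite mulmxA h_r0 root_reflmxE (_ : bil r0 v = 0) ?scale0r ?addr0 //.
  by move: vs_v; rewrite !inE => /or3P[]/eqP->; rewrite bil_rv4.
move=> h [h_iso h_r0] chamber.
have rho_h : rho *m h = rho.
  by apply: chamber_rho chamber; [rewrite bil_isometry // bil_rv4 | exact: tcoord_rho].
case: (stabilizer_r0_rho h_iso h_r0 rho_h) => ->; first exact: gen_one.
by apply: gen_base; do 4 right.
Qed.

Lemma gen_group_of_OplusL1 (R : realType) (g : 'M[int]_4) : OplusL1 R g -> gen_group L1_gens g.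
Proof.
pose C h := h *m Gram *m h^T = Gram /\ 0 < tcoord (r0 *m h).
case=> /andP[_ /eqP g_iso] /spinor_norm_one_tcoord tg.
have r0_norm h : h *m Gram *m h^T = Gram -> bil (r0 *m h) (r0 *m h) = 2.
  by move=> h_iso; rewrite bil_isometry // bil_rv4.
apply: (@chamber_descent r0 simple_roots C) => //; first by rewrite bil_rv4.
- move=> h v [h_iso th] simple_v; have [v_root _] := simple_roots_root simple_v.
  split; first exact: isometry_mul (root_reflmx_isometry v_root).
  by rewrite mulmxA tcoord_root_reflmx_gt0 // r0_norm.
move=> h [h_iso th] chamber; apply: gen_group_stabilizer_r0 => //.
exact: chamber_norm2 (r0_norm h h_iso) th chamber.
Qed.

Theorem mainTheorem5 (R : realType) (g : 'M[int]_4) :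
  OplusL1 R g <-> gen_group L1_gens g.
Proof. by split; [apply: gen_group_of_OplusL1 | apply: OplusL1_of_gen_group]. Qed.
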